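(* Let $A$ be a centrally essential ring such that the factor ring $A/J(A)$ is commutative, where $J(A)$ is the Jacobson radical. Then every minimal right ideal $S$ of $A$ is contained in the center $Z(A)$. In particular, every minimal right ideal of $A$ is a two-sided ideal, and the right socle $\mathrm{Soc}\,A_A$ is contained in $Z(A)$.
   Context: All rings are associative, unital and non-zero. $Z(A)$ denotes the center of a ring $A$. A ring $A$ is centrally essential if either $A$ is commutative or for every non-central element $a\in A$ there exist non-zero central elements $x,y\in Z(A)$ with $ax=y$. *)

From mathcomp Require Import all_boot all_algebra.
Set Implicit Arguments. Unset Strict Implicit. Unset Printing Implicit Defensive.
Import GRing.Theory.
Local Open Scope ring_scope.

Definition central (A : nzRingType) (x : A) : Prop := forall y : A, x * y = y * x.

Definition center (A : nzRingType) : A -> Prop := fun x => central x.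

Definition is_commutative (A : nzRingType) : Prop := forall x y : A, x * y = y * x.

Definition centrally_essential (A : nzRingType) : Prop :=
  is_commutative A \/
  forall a : A, ~ central a ->
    exists x y : A, [/\ central x, central y, x != 0, y != 0 & a * x = y].

Definition sub_set (A : nzRingType) (I J : A -> Prop) : Prop := forall x, I x -> J x.

Definition right_ideal (A : nzRingType) (I : A -> Prop) : Prop :=
  [/\ I 0, (forall x y, I x -> I y -> I (x - y)) & (forall x a, I x -> I (x * a))].

Definition left_closed (A : nzRingType) (I : A -> Prop) : Prop :=
  forall a x, I x -> I (a * x).

Definition two_sided_ideal (A : nzRingType) (I : A -> Prop) : Prop :=
  right_ideal I /\ left_closed I.

Definition maximal_right_ideal (A : nzRingType) (M : A -> Prop) : Prop :=
  [/\ right_ideal M, ~ M 1 &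
      forall I : A -> Prop, right_ideal I -> sub_set M I -> ~ I 1 -> sub_set I M].

Definition jacobson (A : nzRingType) : A -> Prop :=
  fun x => forall M : A -> Prop, maximal_right_ideal M -> M x.

(* A/J(A) is commutative: all commutators lie in J(A) *)
Definition comm_mod_jacobson (A : nzRingType) : Prop :=
  forall x y : A, jacobson (x * y - y * x).

Definition minimal_right_ideal (A : nzRingType) (S : A -> Prop) : Prop :=
  [/\ right_ideal S, (exists x, S x /\ x != 0) &
      forall T : A -> Prop, right_ideal T -> sub_set T S ->
        (forall x, T x -> x = 0) \/ sub_set S T].

(* right socle Soc A_A: the sum of all minimal right ideals, i.e. the smallest
   right ideal containing every minimal right ideal *)
Definition right_socle (A : nzRingType) : A -> Prop :=
  fun x => forall I : A -> Prop, right_ideal I ->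
    (forall S : A -> Prop, minimal_right_ideal S -> sub_set S I) -> I x.

From mathcomp Require Import all_boot all_algebra.
From Stdlib Require Import Classical.
Set Implicit Arguments. Unset Strict Implicit.
Import GRing.Theory.
Local Open Scope ring_scope.

(* A minimal right ideal S is annihilated on the right by J(A): for s in S the
   right ideal sA is 0 or S, and in the latter case s = s j' forces 1 - j' into
   the right annihilator of s, which no proper right ideal containing J(A) can
   contain.  So when A/J(A) is commutative, s x y = s y x for s in S.  A nonzero
   central d in S generates S, whence every s = d a in S is central:
   s y = d a y = d y a = y d a.  Central essentiality supplies such a d as s x
   for any non-central s in S.  Finally the right socle lies in the right ideal
   {z | zA is central}, which contains every central minimal right ideal. *)

Section MinimalRightIdeals.
Variable A : nzRingType.
Implicit Types (S I : A -> Prop) (s d x y : A).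

Lemma right_ideal_mul_closed I s a : right_ideal I -> I s -> I (s * a).
Proof. by case=> _ _; apply. Qed.

Lemma right_ideal_mulr s : right_ideal (fun z : A => exists a, z = s * a).
Proof.
split; first by exists 0; rewrite mulr0.
- by move=> _ _ [a ->] [b ->]; exists (a - b); rewrite mulrBr.
- by move=> _ b [a ->]; exists (a * b); rewrite mulrA.
Qed.

Lemma minimal_right_ideal_generated S d s :
  minimal_right_ideal S -> S d -> d != 0 -> S s -> exists a, s = d * a.
Proof.
move=> [SI _ Smin] Sd dn0 Ss.
have sub : sub_set (fun z => exists a, z = d * a) S.
  by move=> _ [a ->]; exact: right_ideal_mul_closed.
case: (Smin _ (right_ideal_mulr d) sub) => [triv | full]; last exact: full.
by have d0 := triv d (ex_intro _ 1 (esym (mulr1 d))); rewrite d0 eqxx in dn0.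
Qed.

Lemma minimal_right_ideal_mul_jacobson S s j :
  minimal_right_ideal S -> S s -> jacobson j -> s * j = 0.
Proof.
move=> mS Ss Jj; have [SI _ _] := mS.
have [-> | sn0] := eqVneq s 0; first by rewrite mul0r.
apply: (Jj (fun a => s * a = 0)); split.
- split; first by rewrite mulr0.
  + by move=> u v su sv; rewrite mulrBr su sv subrr.
  + by move=> u a su; rewrite mulrA su mul0r.
- by rewrite mulr1; apply/eqP.
move=> I [I0 IB IM] annI nI1 u Iu.
set T := fun z => exists i, I i /\ z = s * i.
have Tr : right_ideal T.
  split; first by exists 0; rewrite mulr0.
  + by move=> _ _ [i [Ii ->]] [k [Ik ->]]; exists (i - k); rewrite mulrBr; split=> //; exact: IB.
  + by move=> _ a [i [Ii ->]]; exists (i * a); rewrite mulrA; split=> //; exact: IM.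
have TS : sub_set T S by move=> _ [i [_ ->]]; exact: right_ideal_mul_closed.
have [_ _ Smin] := mS.
case: (Smin T Tr TS) => [T0 | ST]; first by apply: T0; exists u.
have [i [Ii si]] := ST s Ss.
have I1i : I (1 - i) by apply: annI; rewrite mulrBr mulr1 -si subrr.
case: nI1; have := IB _ _ I1i (IB _ _ I0 Ii).
by rewrite sub0r opprK subrK.
Qed.

Lemma minimal_right_ideal_mulrC S s x y :
  comm_mod_jacobson A -> minimal_right_ideal S -> S s -> s * (x * y) = s * (y * x).
Proof.
move=> commJ mS Ss; apply/eqP; rewrite -subr_eq0 -mulrBr.
by rewrite (minimal_right_ideal_mul_jacobson mS Ss (commJ x y)).
Qed.

Lemma minimal_right_ideal_central S d :
  comm_mod_jacobson A -> minimal_right_ideal S -> S d -> central d -> d != 0 ->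
  sub_set S (@center A).
Proof.
move=> commJ mS Sd cd dn0 s Ss y.
have [a ->] := minimal_right_ideal_generated mS Sd dn0 Ss.
by rewrite -mulrA (minimal_right_ideal_mulrC _ _ commJ mS Sd) mulrA cd mulrA.
Qed.

Lemma centrally_essential_minimal_right_ideal_central S :
  centrally_essential A -> comm_mod_jacobson A -> minimal_right_ideal S ->
  sub_set S (@center A).
Proof.
move=> [commA | ceA] commJ mS s Ss; first by move=> y; exact: commA.
have [cs | ncs] := classic (central s); first exact: cs.
have [x [d [_ cd _ dn0 sxd]]] := ceA s ncs.
have Sd : S d by rewrite -sxd; apply: right_ideal_mul_closed Ss; case: mS.
exact: (minimal_right_ideal_central commJ mS Sd cd dn0).
Qed.

Lemma central_right_ideal_two_sided I :
  right_ideal I -> sub_set I (@center A) -> two_sided_ideal I.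
Proof.
by move=> rI IZ; split=> // a x Ix; rewrite -(IZ x Ix a); exact: right_ideal_mul_closed.
Qed.

Lemma right_ideal_central_multiples :
  right_ideal (fun z : A => forall a, central (z * a)).
Proof.
split; first by move=> a y; rewrite mul0r mul0r mulr0.
- by move=> u v cu cv a y; rewrite mulrBl !mulrBl !mulrBr cu cv.
- by move=> u b cu a; rewrite -mulrA; exact: cu.
Qed.

Lemma right_socle_central :
  (forall S, minimal_right_ideal S -> sub_set S (@center A)) ->
  sub_set (@right_socle A) (@center A).
Proof.
move=> minZ z socz; rewrite -[z]mulr1.
apply: (socz _ right_ideal_central_multiples) => S mS s Ss a.
by apply: (minZ _ mS); apply: right_ideal_mul_closed Ss; case: mS.
Qed.

End MinimalRightIdeals.

Theorem mainTheorem3 (A : nzRingType) :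
  centrally_essential A -> comm_mod_jacobson A ->
  [/\ (forall S : A -> Prop, minimal_right_ideal S -> sub_set S (@center A)),
      (forall S : A -> Prop, minimal_right_ideal S -> two_sided_ideal S) &
      sub_set (@right_socle A) (@center A)].
Proof.
move=> ceA commJ.
have minZ := centrally_essential_minimal_right_ideal_central ceA commJ.
split=> //; last exact: right_socle_central.
by move=> S mS; apply: central_right_ideal_two_sided (minZ S mS); case: mS.
Qed.
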